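(* Let $a,b,c,d,e,f,g,h\ge0$ and $k,l>0$ be integers with $a+b+c+d>0$, $e+f>0$, $g+h>0$, and let $$E=\begin{bmatrix} J_{k,a}&J_{k,b}&-J_{k,c}&-J_{k,d}&J_{k,e}&-J_{k,f}&0&0\\ -J_{k,a}&-J_{k,b}&J_{k,c}&J_{k,d}&-J_{k,e}&J_{k,f}&0&0\\ J_{l,a}&-J_{l,b}&J_{l,c}&-J_{l,d}&0&0&J_{l,g}&-J_{l,h}\\ -J_{l,a}&J_{l,b}&-J_{l,c}&J_{l,d}&0&0&-J_{l,g}&J_{l,h} \end{bmatrix}$$ satisfy $E\mathbf 1=0$ and $\mathbf 1^TE=0^T$. Then $E$ is realizable if and only if $g-h$ and $e-f$ are even.
   Context: $J_{p,q}$ is the $p\times q$ all-ones matrix. Two $(0,1)$ matrices $A,B$ are Gram mates if $AA^T=BB^T$, $A^TA=B^TB$ and $A\neq B$. A $(0,1,-1)$ matrix $E$ with $E\mathbf 1=0$, $\mathbf 1^TE=0^T$ is realizable if there is a $(0,1)$ matrix $A$ such that $A$ and $A+E$ are Gram mates. *)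

From mathcomp Require Import all_boot all_order all_algebra.
Set Implicit Arguments. Unset Strict Implicit. Unset Printing Implicit Defensive.
Import Order.TTheory GRing.Theory Num.Theory.
Local Open Scope ring_scope.

Definition is01 (m n : nat) (A : 'M[int]_(m, n)) : Prop :=
  forall i j, A i j = 0 \/ A i j = 1.

Definition gram_mates (m n : nat) (A B : 'M[int]_(m, n)) : Prop :=
  [/\ is01 A, is01 B, A *m A^T = B *m B^T, A^T *m A = B^T *m B & A <> B].

Definition realizable (m n : nat) (E : 'M[int]_(m, n)) : Prop :=
  exists A : 'M[int]_(m, n), is01 A /\ gram_mates A (A + E).

Definition rowblk (k l i : nat) : nat :=
  if (i < k)%N then 0%N else if (i < k + k)%N then 1%N
  else if (i < k + k + l)%N then 2%N else 3%N.

Definition colblk (a b c d e f g h j : nat) : nat :=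
  if (j < a)%N then 0%N
  else if (j < a + b)%N then 1%N
  else if (j < a + b + c)%N then 2%N
  else if (j < a + b + c + d)%N then 3%N
  else if (j < a + b + c + d + e)%N then 4%N
  else if (j < a + b + c + d + e + f)%N then 5%N
  else if (j < a + b + c + d + e + f + g)%N then 6%N
  else 7%N.

Definition row0 (c : nat) : int :=
  match c with
  | 0%N => 1 | 1%N => 1 | 2%N => -1 | 3%N => -1 | 4%N => 1 | 5%N => -1 | _ => 0
  end.
Definition row2 (c : nat) : int :=
  match c with
  | 0%N => 1 | 1%N => -1 | 2%N => 1 | 3%N => -1 | 4%N => 0 | 5%N => 0 | 6%N => 1 | _ => -1
  end.
Definition blk_sign (r c : nat) : int :=
  match r with
  | 0%N => row0 c | 1%N => - row0 c | 2%N => row2 c | _ => - row2 c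
  end.

Definition Emat (a b c d e f g h k l : nat) :
  'M[int]_(k + k + l + l, a + b + c + d + e + f + g + h) :=
  \matrix_(i, j) blk_sign (rowblk k l i) (colblk a b c d e f g h j).

From mathcomp Require Import all_boot all_order all_algebra zify ring.
Import GRing.Theory.
Set Implicit Arguments. Unset Strict Implicit. Unset Printing Implicit Defensive.
Local Open Scope ring_scope.

(* Write B = A + E with A, B (0,1) matrices.  Where E is nonzero the entries of A and B are
   forced (A = 1 exactly where E = -1); only the zero blocks of E carry free entries.

   Sufficiency: fill the free blocks so that each row of A depends only on its row block,
   putting ones in the first (e+f)/2 columns of the e- and of the f-block (resp. of the g- and
   h-block).  Since row block 1 of E is the negative of row block 0 (and 3 of 2), the rows of B
   are those of A with the blocks 0 <-> 1 and 2 <-> 3 exchanged.  Hence A^T A = B^T B, and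
   A A^T = B B^T reduces to linear identities which follow from the zero row sums of E and
   from the numbers of ones in the e- and f-blocks (g- and h-blocks) differing by (e-f)/2
   (resp. (g-h)/2).

   Necessity: the column Gram condition between a column of the first four column blocks and
   a g- or h-column shows that the row blocks 0 and 1 of A have equal column sums there; on
   the other columns these sums are forced.  So the column sums of row block 0 minus those of
   row block 1 form the vector -k r for A, and k r for B, where r is the sign pattern of row
   block 0.  Summing the row Gram conditions of these rows against row k + k then gives
   k r.(A_(k+k) + B_(k+k)) = 0, while r.(A_(k+k) + B_(k+k)) is a + b - c - d plus twice an
   integer.  Hence a + b - c - d is even, and by the zero row sums so are e - f and g - h. *)

Lemma sumz_const_nat (x : int) m n : \sum_(m <= i < n) x = (n - m)%:Z * x.
Proof. by rewrite sumr_const_nat -mulr_natl natz. Qed.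

Lemma sum_prefix_bit (H : bool -> int) lo len T :
  \sum_(lo <= j < lo + len) H (j - lo < T)%N =
  (minn len T)%:Z * H true + (len - minn len T)%:Z * H false.
Proof.
rewrite -{1}[lo]add0n big_addn addKn (big_cat_nat _ (geq_minl len T)) //=.
rewrite (eq_big_nat _ _ (F2 := fun=> H true)); last first.
  by move=> j /andP[_ ?]; rewrite addnK (_ : (j < T)%N = true) //; lia.
rewrite [in X in _ + X](eq_big_nat _ _ (F2 := fun=> H false)); last first.
  by move=> j /andP[? ?]; rewrite addnK (_ : (j < T)%N = false) //; lia.
by rewrite !sumz_const_nat subn0.
Qed.

Section Blocks.

Variable s : seq nat.

Definition blk_start (bk : nat) : nat := sumn (take bk s).

Definition blk_index (bf : nat -> nat) : Prop :=
  forall bk j, (bk < size s)%N -> (blk_start bk <= j < blk_start bk.+1)%N -> bf j = bk.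

Lemma blk_start_mono : {homo blk_start : bk bk' / (bk <= bk')%N}.
Proof. by move=> bk bk' /subnKC <-; rewrite /blk_start takeD sumn_cat leq_addr. Qed.

Lemma blk_start_size : blk_start (size s) = sumn s.
Proof. by rewrite /blk_start take_size. Qed.

Lemma blk_startS bk : (bk < size s)%N -> blk_start bk.+1 = (blk_start bk + nth 0 s bk)%N.
Proof. by move=> lt_bk; rewrite /blk_start (take_nth 0 lt_bk) -cats1 sumn_cat /= addn0. Qed.

Lemma big_blocks (R : nmodType) (bf : nat -> nat) (F : nat -> nat -> R) : blk_index bf ->
  \sum_(0 <= j < sumn s) F (bf j) j =
  \sum_(bk < size s) \sum_(blk_start bk <= j < blk_start bk.+1) F bk j.
Proof.
move=> bfE; rewrite -blk_start_size.
suff sumE N : (N <= size s)%N -> \sum_(0 <= j < blk_start N) F (bf j) j =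
    \sum_(bk < N) \sum_(blk_start bk <= j < blk_start bk.+1) F bk j by exact: sumE.
elim: N => [|N IH] leNs; first by rewrite big_ord0 big_geq // /blk_start take0.
rewrite big_ord_recr -(IH (ltnW leNs)) /= (big_cat_nat (leq0n _) (blk_start_mono (leqnSn N))).
by congr (_ + _); apply: eq_big_nat => j /(bfE _ _ leNs) ->.
Qed.

Lemma sum_blocks_affine (bf : nat -> nat) (C al be u v : nat -> int) : blk_index bf ->
  \sum_(0 <= j < sumn s) (C (bf j) + al (bf j) * u j + be (bf j) * v j) =
  \sum_(bk < size s) ((nth 0 s bk)%:Z * C bk
     + al bk * \sum_(blk_start bk <= j < blk_start bk.+1) u j
     + be bk * \sum_(blk_start bk <= j < blk_start bk.+1) v j).
Proof.
move=> bfE; rewrite (big_blocks (fun bk j => C bk + al bk * u j + be bk * v j) bfE).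
apply: eq_bigr => bk _; rewrite !big_split /= sumz_const_nat -!mulr_sumr.
by rewrite blk_startS // addKn.
Qed.

Lemma sum_blocks_const (bf : nat -> nat) (C : nat -> int) : blk_index bf ->
  \sum_(0 <= j < sumn s) C (bf j) = \sum_(bk < size s) (nth 0 s bk)%:Z * C bk.
Proof.
move=> bfE; rewrite (big_blocks (fun bk _ => C bk) bfE).
by apply: eq_bigr => bk _; rewrite sumz_const_nat blk_startS // addKn.
Qed.

End Blocks.

Section BlockIndices.

Variables a b c d e f g h k l : nat.

Definition col_sizes := [:: a; b; c; d; e; f; g; h].
Definition row_sizes := [:: k; k; l; l].

Lemma sumn_col_sizes : sumn col_sizes = (a + b + c + d + e + f + g + h)%N.
Proof. by rewrite /= addn0 !addnA. Qed.

Lemma sumn_row_sizes : sumn row_sizes = (k + k + l + l)%N.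
Proof. by rewrite /= addn0 !addnA. Qed.

Lemma colblk_index : blk_index col_sizes (colblk a b c d e f g h).
Proof.
rewrite /blk_index /blk_start /colblk.
by case=> [|[|[|[|[|[|[|[|]]]]]]]] j //= _ ?; repeat case: ifP => ?; lia.
Qed.

Lemma rowblk_index : blk_index row_sizes (rowblk k l).
Proof.
rewrite /blk_index /blk_start /rowblk.
by case=> [|[|[|[|]]]] i //= _ ?; repeat case: ifP => ?; lia.
Qed.

Lemma sum_colblk_affine (C al be u v : nat -> int) :
  \sum_(0 <= j < a + b + c + d + e + f + g + h)
     (C (colblk a b c d e f g h j) + al (colblk a b c d e f g h j) * u j
      + be (colblk a b c d e f g h j) * v j) =
  \sum_(bk < 8) ((nth 0 col_sizes bk)%:Z * C bk
     + al bk * \sum_(blk_start col_sizes bk <= j < blk_start col_sizes bk.+1) u j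
     + be bk * \sum_(blk_start col_sizes bk <= j < blk_start col_sizes bk.+1) v j).
Proof. by rewrite -sumn_col_sizes (sum_blocks_affine _ _ _ _ _ colblk_index). Qed.

Lemma sum_rowblk_affine (C al be u v : nat -> int) :
  \sum_(0 <= i < k + k + l + l)
     (C (rowblk k l i) + al (rowblk k l i) * u i + be (rowblk k l i) * v i) =
  \sum_(r < 4) ((nth 0 row_sizes r)%:Z * C r
     + al r * \sum_(blk_start row_sizes r <= i < blk_start row_sizes r.+1) u i
     + be r * \sum_(blk_start row_sizes r <= i < blk_start row_sizes r.+1) v i).
Proof. by rewrite -sumn_row_sizes (sum_blocks_affine _ _ _ _ _ rowblk_index). Qed.

Lemma sum_colblk_const (C : nat -> int) :
  \sum_(j < a + b + c + d + e + f + g + h) C (colblk a b c d e f g h j) =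
  a%:Z * C 0%N + b%:Z * C 1%N + c%:Z * C 2%N + d%:Z * C 3%N
  + e%:Z * C 4%N + f%:Z * C 5%N + g%:Z * C 6%N + h%:Z * C 7%N.
Proof.
rewrite -(big_mkord xpredT (fun j => C (colblk a b c d e f g h j))) -sumn_col_sizes.
by rewrite (sum_blocks_const C colblk_index) !big_ord_recr big_ord0 /= add0r.
Qed.

Lemma sum_rowblk_const (C : nat -> int) :
  \sum_(i < k + k + l + l) C (rowblk k l i) =
  k%:Z * C 0%N + k%:Z * C 1%N + l%:Z * C 2%N + l%:Z * C 3%N.
Proof.
rewrite -(big_mkord xpredT (fun i => C (rowblk k l i))) -sumn_row_sizes.
by rewrite (sum_blocks_const C rowblk_index) !big_ord_recr big_ord0 /= add0r.
Qed.

End BlockIndices.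

Lemma rowblk_lt4 k l i : (rowblk k l i < 4)%N.
Proof. by rewrite /rowblk; repeat case: ifP. Qed.

Lemma colblk_lt8 a b c d e f g h j : (colblk a b c d e f g h j < 8)%N.
Proof. by rewrite /colblk; repeat case: ifP. Qed.

Lemma colblk0_lt4 a b c d e f g h :
  (0 < a + b + c + d)%N -> (colblk a b c d e f g h 0 < 4)%N.
Proof. by rewrite /colblk; repeat case: ifP => ?; lia. Qed.

Lemma rowblkE0 k l i : (0 <= i < k)%N -> rowblk k l i = 0%N.
Proof. by rewrite /rowblk; case: ifP; lia. Qed.

Lemma rowblkE1 k l i : (k <= i < k + k)%N -> rowblk k l i = 1%N.
Proof. by rewrite /rowblk; repeat case: ifP; lia. Qed.

Lemma rowblk_kk k l : (0 < l)%N -> rowblk k l (k + k) = 2%N.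
Proof. by rewrite /rowblk; repeat case: ifP; lia. Qed.

Definition partner (r : nat) : nat := if odd r then r.-1 else r.+1.

Lemma blk_sign_partner r bk : (r < 4)%N -> blk_sign (partner r) bk = - blk_sign r bk.
Proof. by case: r => [|[|[|[|]]]] //= _; rewrite opprK. Qed.

Lemma blk_sign_range r bk : blk_sign r bk \in [:: -1; 0; 1].
Proof. by case: r => [|[|[|r]]]; case: bk => [|[|[|[|[|[|[|bk]]]]]]]. Qed.

Lemma Emat_neq0 a b c d e f g h k l :
  (0 < k)%N -> (0 < a + b + c + d)%N -> Emat a b c d e f g h k l <> 0.
Proof.
move=> k_gt0 abcd_gt0; have i0 : (0 < k + k + l + l)%N by lia.
have j0 : (0 < a + b + c + d + e + f + g + h)%N by lia.
move=> /matrixP /(_ (Ordinal i0) (Ordinal j0)); rewrite !mxE /= /rowblk k_gt0.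
by move: (colblk0_lt4 e f g h abcd_gt0); case: (colblk _ _ _ _ _ _ _ _ 0) => [|[|[|[|]]]].
Qed.

Lemma Emat_row_sums a b c d e f g h k l : (0 < k)%N -> (0 < l)%N ->
  Emat a b c d e f g h k l *m (const_mx 1 : 'cV[int]_(a + b + c + d + e + f + g + h)) = 0 ->
  (a + b + e = c + d + f)%N /\ (a + c + g = b + d + h)%N.
Proof.
move=> k_gt0 l_gt0 /matrixP E1.
have row_sum (i : 'I_(k + k + l + l)) : \sum_(j < a + b + c + d + e + f + g + h)
    blk_sign (rowblk k l i) (colblk a b c d e f g h j) = 0.
  have := E1 i ord0; rewrite !mxE => sum0; rewrite -[in RHS]sum0.
  by apply: eq_bigr => j _; rewrite !mxE mulr1.
have lt_0m : (0 < k + k + l + l)%N by lia.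
have lt_kkm : (k + k < k + k + l + l)%N by lia.
have := row_sum (Ordinal lt_0m); have := row_sum (Ordinal lt_kkm).
by rewrite !sum_colblk_const /= rowblk_kk // rowblkE0 //=; lia.
Qed.

Definition fill (s : int) (t : bool) : bool := if s == 0 then t else s == -1.

Lemma fill_add_sign s t : s \in [:: -1; 0; 1] -> (fill s t)%:R + s = (fill (- s) t)%:R :> int.
Proof. by rewrite !inE => /or3P[] /eqP ->; rewrite /fill //= addr0. Qed.

Definition sign_fill (r bk : nat) (t : bool) : int := (fill (blk_sign r bk) t)%:R.

Lemma sign_fill01 r bk t : sign_fill r bk t = 0 \/ sign_fill r bk t = 1.
Proof. by rewrite /sign_fill; case: fill; [right | left]. Qed.

Lemma minn_half_diff x y : ~~ odd (x + y) ->
  ((minn x (x + y)./2)%:Z - (minn y (x + y)./2)%:Z) * 2 = x%:Z - y%:Z.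
Proof.
by move=> xy_even; have := odd_double_half (x + y); rewrite (negbTE xy_even) -addnn; lia.
Qed.

Section Witness.

Variables a b c d e f g h k l : nat.

Local Notation n := (a + b + c + d + e + f + g + h)%N.
Local Notation m := (k + k + l + l)%N.
Local Notation cb := (colblk a b c d e f g h).
Local Notation rb := (rowblk k l).
Local Notation cs := (col_sizes a b c d e f g h).
Local Notation E := (Emat a b c d e f g h k l).

Definition free_cap (bk : nat) : nat :=
  nth 0%N [:: 0; 0; 0; 0; (e + f)./2; (e + f)./2; (g + h)./2; (g + h)./2]%N bk.

Definition free_bit (j : nat) : bool := (j - blk_start cs (cb j) < free_cap (cb j))%N.

Definition witness_row (r j : nat) : int := sign_fill r (cb j) (free_bit j).

Definition witness : 'M[int]_(m, n) := \matrix_(i, j) witness_row (rb i) j.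

Lemma witnessE i j : witness i j = witness_row (rb i) j.
Proof. by rewrite mxE. Qed.

Lemma witness_addE i j : (witness + E) i j = witness_row (partner (rb i)) j.
Proof.
rewrite !mxE /witness_row /sign_fill fill_add_sign ?blk_sign_range //.
by rewrite blk_sign_partner ?rowblk_lt4.
Qed.

Lemma witness_col_gram : witness^T *m witness = (witness + E)^T *m (witness + E).
Proof.
apply/matrixP => j j'; rewrite !mxE.
under eq_bigr do rewrite mxE !witnessE.
under [RHS]eq_bigr do rewrite mxE !witness_addE.
rewrite (@sum_rowblk_const k l (fun r => witness_row r j * witness_row r j')).
rewrite (@sum_rowblk_const k l (fun r => witness_row (partner r) j * witness_row (partner r) j')).
by rewrite /=; ring.
Qed.

Lemma witness_row_dot r r' :
  \sum_(j < n) witness_row r j * witness_row r' j =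
  \sum_(bk < 8) let T := minn (nth 0 cs bk) (free_cap bk) in
     T%:Z * (sign_fill r bk true * sign_fill r' bk true)
     + (nth 0 cs bk - T)%:Z * (sign_fill r bk false * sign_fill r' bk false).
Proof.
rewrite -(big_mkord xpredT (fun j => witness_row r j * witness_row r' j)) -sumn_col_sizes.
rewrite (big_blocks (fun bk j => let t := (j - blk_start cs bk < free_cap bk)%N in
                       sign_fill r bk t * sign_fill r' bk t) (@colblk_index a b c d e f g h)).
apply: eq_bigr => bk _; rewrite blk_startS //.
exact: (sum_prefix_bit (fun t => sign_fill r bk t * sign_fill r' bk t)).
Qed.

Hypothesis row0_sum : (a + b + e = c + d + f)%N.
Hypothesis row2_sum : (a + c + g = b + d + h)%N.
Hypothesis ef_even : ~~ odd (e + f).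
Hypothesis gh_even : ~~ odd (g + h).

Lemma witness_row_dot_partner r r' : (r < 4)%N -> (r' < 4)%N ->
  \sum_(j < n) witness_row (partner r) j * witness_row (partner r') j =
  \sum_(j < n) witness_row r j * witness_row r' j.
Proof.
rewrite !witness_row_dot !big_ord_recr !big_ord0 /= /free_cap /= !minn0 !subn0.
have Def := minn_half_diff ef_even; have Dgh := minn_half_diff gh_even.
have Le := geq_minl e (e + f)./2; have Lf := geq_minl f (e + f)./2.
have Lg := geq_minl g (g + h)./2; have Lh := geq_minl h (g + h)./2.
set Te := minn e _ in Def Le *; set Tf := minn f _ in Def Lf *.
set Tg := minn g _ in Dgh Lg *; set Th := minn h _ in Dgh Lh *.
clearbody Te Tf Tg Th.
by case: r => [|[|[|[|]]]] //; case: r' => [|[|[|[|]]]] // _ _; rewrite /sign_fill /=; lia.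
Qed.

Lemma witness_row_gram : witness *m witness^T = (witness + E) *m (witness + E)^T.
Proof.
apply/matrixP => i i'; rewrite !mxE.
under eq_bigr do rewrite [_^T _ _]mxE !witnessE.
under [RHS]eq_bigr do rewrite [_^T _ _]mxE !witness_addE.
by rewrite witness_row_dot_partner ?rowblk_lt4.
Qed.

Hypothesis k_gt0 : (0 < k)%N.
Hypothesis abcd_gt0 : (0 < a + b + c + d)%N.

Lemma realizable_witness : realizable E.
Proof.
have w01 : is01 witness by move=> i j; rewrite witnessE; apply: sign_fill01.
have wE01 : is01 (witness + E) by move=> i j; rewrite witness_addE; apply: sign_fill01.
exists witness; split => //; split => //; [exact: witness_row_gram | exact: witness_col_gram |].
by rewrite -[X in X = _]addr0 => /addrI /esym; apply: Emat_neq0.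
Qed.

End Witness.

Lemma bit_split (x s : int) : x = 0 \/ x = 1 -> x + s = 0 \/ x + s = 1 ->
  x = (s == -1)%:R + (s == 0)%:R * x.
Proof.
move=> x01 xs01; case: (s =P -1) => [s_m1 | /eqP s_nm1]; case: (s =P 0) => [s0 | /eqP s_n0] /=;
  rewrite ?mul0r ?mul1r ?addr0 ?add0r //; lia.
Qed.

Lemma gram_defect_affine (x y s s' : int) :
  x = 0 \/ x = 1 -> x + s = 0 \/ x + s = 1 -> y = 0 \/ y = 1 -> y + s' = 0 \/ y + s' = 1 ->
  x * y - (x + s) * (y + s') =
  - (s * s' + s' * (s == -1)%:R + s * (s' == -1)%:R)
  + - s' * (s == 0)%:R * x + - s * (s' == 0)%:R * y.
Proof.
move=> x01 xs01 y01 ys01.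
have -> : x * y - (x + s) * (y + s') = - (s * s') - x * s' - s * y by ring.
by rewrite {1}(bit_split x01 xs01) {1}(bit_split y01 ys01); ring.
Qed.

Definition nat_entry m n (M : 'M[int]_(m, n)) (i j : nat) : int :=
  match (insub i : option 'I_m), (insub j : option 'I_n) with
  | Some i', Some j' => M i' j'
  | _, _ => 0
  end.

Lemma nat_entryE m n (M : 'M[int]_(m, n)) (i : 'I_m) (j : 'I_n) : nat_entry M i j = M i j.
Proof. by rewrite /nat_entry !valK. Qed.

Lemma mulmx_tr_nat m n (M : 'M[int]_(m, n)) (i i' : 'I_m) :
  (M *m M^T) i i' = \sum_(0 <= j < n) nat_entry M i j * nat_entry M i' j.
Proof. by rewrite mxE big_mkord; apply: eq_bigr => j _; rewrite mxE !nat_entryE. Qed.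

Lemma tr_mulmx_nat m n (M : 'M[int]_(m, n)) (j j' : 'I_n) :
  (M^T *m M) j j' = \sum_(0 <= i < m) nat_entry M i j * nat_entry M i j'.
Proof. by rewrite mxE big_mkord; apply: eq_bigr => i _; rewrite mxE !nat_entryE. Qed.

Section Necessity.

Variables a b c d e f g h k l : nat.

Local Notation n := (a + b + c + d + e + f + g + h)%N.
Local Notation m := (k + k + l + l)%N.
Local Notation cb := (colblk a b c d e f g h).
Local Notation rb := (rowblk k l).
Local Notation cs := (col_sizes a b c d e f g h).
Local Notation E := (Emat a b c d e f g h k l).

Variable A : 'M[int]_(m, n).
Hypothesis A01 : is01 A.
Hypothesis B01 : is01 (A + E).
Hypothesis row_gram : A *m A^T = (A + E) *m (A + E)^T.
Hypothesis col_gram : A^T *m A = (A + E)^T *m (A + E).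

Local Notation x := (nat_entry A).
Local Notation y := (nat_entry (A + E)).
Local Notation sg i j := (blk_sign (rb i) (cb j)).

Lemma nat_entry_addE i j : (i < m)%N -> (j < n)%N -> y i j = x i j + sg i j.
Proof.
move=> lt_im lt_jn; rewrite -[i]/(val (Ordinal lt_im)) -[j]/(val (Ordinal lt_jn)).
by rewrite !nat_entryE !mxE.
Qed.

Lemma entry01 i j : (i < m)%N -> (j < n)%N ->
  (x i j = 0 \/ x i j = 1) /\ (x i j + sg i j = 0 \/ x i j + sg i j = 1).
Proof.
move=> lt_im lt_jn; rewrite -nat_entry_addE //.
rewrite -[i]/(val (Ordinal lt_im)) -[j]/(val (Ordinal lt_jn)) !nat_entryE.
by split; [exact: A01 | exact: B01].
Qed.

Lemma row_defect i i' : (i < m)%N -> (i' < m)%N ->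
  \sum_(0 <= j < n) (x i j * x i' j - y i j * y i' j) = 0.
Proof.
move=> lt_im lt_i'm; rewrite sumrB.
have /matrixP/(_ (Ordinal lt_im) (Ordinal lt_i'm)) := row_gram.
by rewrite !mulmx_tr_nat /= => ->; rewrite subrr.
Qed.

Lemma col_defect j j' : (j < n)%N -> (j' < n)%N ->
  \sum_(0 <= i < m) (x i j * x i j' - y i j * y i j') = 0.
Proof.
move=> lt_jn lt_j'n; rewrite sumrB.
have /matrixP/(_ (Ordinal lt_jn) (Ordinal lt_j'n)) := col_gram.
by rewrite !tr_mulmx_nat /= => ->; rewrite subrr.
Qed.

Lemma sum_rows_forced lo hi r j : (hi <= m)%N -> (j < n)%N ->
  (forall i, (lo <= i < hi)%N -> rb i = r) ->
  \sum_(lo <= i < hi) x i j =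
  (hi - lo)%:Z * (blk_sign r (cb j) == -1)%:R
  + (blk_sign r (cb j) == 0)%:R * \sum_(lo <= i < hi) x i j.
Proof.
move=> le_hm lt_jn rbE.
rewrite {1}(eq_big_nat _ _ (F2 := fun i =>
  (blk_sign r (cb j) == -1)%:R + (blk_sign r (cb j) == 0)%:R * x i j)); last first.
  move=> i /[dup] /rbE rbi /andP[_ lt_ihi]; have lt_im : (i < m)%N by exact: leq_trans le_hm.
  by have [x01] := entry01 lt_im lt_jn; rewrite rbi; apply: bit_split.
by rewrite big_split /= sumz_const_nat -mulr_sumr.
Qed.

Lemma sum_rows_addE lo hi r j : (hi <= m)%N -> (j < n)%N ->
  (forall i, (lo <= i < hi)%N -> rb i = r) ->
  \sum_(lo <= i < hi) y i j = \sum_(lo <= i < hi) x i j + (hi - lo)%:Z * blk_sign r (cb j).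
Proof.
move=> le_hm lt_jn rbE; rewrite -sumz_const_nat -big_split /=.
apply: eq_big_nat => i /[dup] /rbE <- /andP[_ lt_ihi].
by rewrite nat_entry_addE // (leq_trans lt_ihi le_hm).
Qed.

Hypothesis abcd_gt0 : (0 < a + b + c + d)%N.

Lemma top_blocks_balanced j : (j < n)%N -> (6 <= cb j)%N ->
  \sum_(0 <= i < k) x i j = \sum_(k <= i < k + k) x i j.
Proof.
move=> lt_jn ge6_j; have lt_0n : (0 < n)%N by lia.
have := col_defect lt_0n lt_jn.
pose s r := blk_sign r (cb 0); pose s' r := blk_sign r (cb j).
pose C r := - (s r * s' r + s' r * (s r == -1)%:R + s r * (s' r == -1)%:R).
pose al r := - s' r * (s r == 0)%:R; pose be r := - s r * (s' r == 0)%:R.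
rewrite (eq_big_nat _ _ (F2 := fun i => C (rb i) + al (rb i) * x i 0%N + be (rb i) * x i j));
  last first.
  move=> i /andP[_ lt_im]; have [? ?] := entry01 lt_im lt_0n; have [? ?] := entry01 lt_im lt_jn.
  by rewrite !nat_entry_addE // gram_defect_affine.
rewrite sum_rowblk_affine !big_ord_recr big_ord0 /= /blk_start /= !addn0 /C /al /be /s /s'.
move: (colblk0_lt4 e f g h abcd_gt0) (colblk_lt8 a b c d e f g h j) ge6_j.
case: (cb 0) => [|[|[|[|]]]] // _; case: (cb j) => [|[|[|[|[|[|[|[|]]]]]]]] //= _ _.
all: lia.
Qed.

Lemma top_blocks_diff j : (j < n)%N ->
  \sum_(0 <= i < k) x i j - \sum_(k <= i < k + k) x i j = - k%:Z * blk_sign 0 (cb j).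
Proof.
move=> lt_jn; have balanced := top_blocks_balanced lt_jn.
have le_km : (k <= m)%N by lia.
have le_kkm : (k + k <= m)%N by lia.
rewrite (sum_rows_forced le_km lt_jn (@rowblkE0 k l)).
rewrite (sum_rows_forced le_kkm lt_jn (@rowblkE1 k l)) subn0 addKn.
move: (colblk_lt8 a b c d e f g h j) balanced.
case: (cb j) => [|[|[|[|[|[|[|[|]]]]]]]] //= _ balanced;
  by rewrite ?mul0r ?mul1r ?mulr1 ?mulr0 ?add0r ?addr0 ?mulrN1 ?opprK // balanced // subrr.
Qed.

Hypothesis k_gt0 : (0 < k)%N.
Hypothesis l_gt0 : (0 < l)%N.

Lemma row_kk_weighted_eq0 :
  \sum_(0 <= j < n) blk_sign 0 (cb j) * (x (k + k) j + y (k + k) j) = 0.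
Proof.
have lt_kkm : (k + k < m)%N by lia.
have le_km : (k <= m)%N by lia.
have le_kkm : (k + k <= m)%N by lia.
have rows_defect lo hi : (hi <= m)%N ->
    \sum_(lo <= i < hi) \sum_(0 <= j < n) (x i j * x (k + k) j - y i j * y (k + k) j) = 0.
  move=> le_hm; rewrite big_nat_cond big1 // => i /andP[/andP[_ lt_ihi] _].
  by apply: row_defect => //; exact: leq_trans lt_ihi le_hm.
have /eqP := congr2 (fun u v : int => u - v) (rows_defect 0 k le_km) (rows_defect k (k + k) le_kkm).
rewrite subrr (exchange_big_nat _ 0 k) (exchange_big_nat _ k (k + k)) -sumrB /=.
rewrite (eq_big_nat _ _ (F2 := fun j =>
  - k%:Z * (blk_sign 0 (cb j) * (x (k + k) j + y (k + k) j)))); last first.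
  move=> j /andP[_ lt_jn]; rewrite !sumrB -!mulr_suml.
  rewrite (sum_rows_addE le_km lt_jn (@rowblkE0 k l)).
  rewrite (sum_rows_addE le_kkm lt_jn (@rowblkE1 k l)) subn0 addKn.
  have /eqP := top_blocks_diff lt_jn; rewrite subr_eq => /eqP ->.
  by rewrite /=; ring.
by rewrite -mulr_sumr mulf_eq0 oppr_eq0 => /orP[/eqP k0 | /eqP //]; lia.
Qed.

Lemma row_kk_weighted_sum :
  \sum_(0 <= j < n) blk_sign 0 (cb j) * (x (k + k) j + y (k + k) j) =
  (a + b)%:Z - (c + d)%:Z + 2 * (\sum_(blk_start cs 4 <= j < blk_start cs 5) x (k + k) j
                               - \sum_(blk_start cs 5 <= j < blk_start cs 6) x (k + k) j).
Proof.
have lt_kkm : (k + k < m)%N by lia.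
pose s bk := blk_sign 2 bk.
pose C bk := blk_sign 0 bk * (2 * (s bk == -1)%:R + s bk).
pose al bk := blk_sign 0 bk * (s bk == 0)%:R.
rewrite (eq_big_nat _ _ (F2 := fun j =>
  C (cb j) + al (cb j) * x (k + k) j + al (cb j) * x (k + k) j)); last first.
  move=> j /andP[_ lt_jn]; have [x01 y01] := entry01 lt_kkm lt_jn.
  rewrite nat_entry_addE // /C /al /s (rowblk_kk k l_gt0) in y01 *.
  by rewrite {1 2}(bit_split x01 y01); ring.
by rewrite sum_colblk_affine !big_ord_recr big_ord0 /= /C /al /s /=; lia.
Qed.

Lemma even_ab_sub_cd : (2 %| (a + b)%:Z - (c + d)%:Z)%Z.
Proof.
apply/dvdzP; exists (\sum_(blk_start cs 5 <= j < blk_start cs 6) x (k + k) j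
                   - \sum_(blk_start cs 4 <= j < blk_start cs 5) x (k + k) j).
by have := row_kk_weighted_eq0; rewrite row_kk_weighted_sum; lia.
Qed.

End Necessity.

Lemma dvdz2_subn_even x y : (2 %| x%:Z - y%:Z)%Z -> ~~ odd (x + y).
Proof.
case/dvdzP => q xy; apply/negP => odd_xy; have := odd_double_half (x + y).
by rewrite odd_xy -addnn; lia.
Qed.

Theorem corollary4p16 (a b c d e f g h k l : nat) :
  (0 < k)%N -> (0 < l)%N ->
  (0 < a + b + c + d)%N -> (0 < e + f)%N -> (0 < g + h)%N ->
  Emat a b c d e f g h k l *m (const_mx 1 : 'cV[int]_(a + b + c + d + e + f + g + h)) = 0 ->
  (const_mx 1 : 'rV[int]_(k + k + l + l)) *m Emat a b c d e f g h k l = 0 ->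
  (realizable (Emat a b c d e f g h k l) <->
   ((2 %| (g%:Z - h%:Z))%Z /\ (2 %| (e%:Z - f%:Z))%Z)).
Proof.
move=> k_gt0 l_gt0 abcd_gt0 _ _ E1 _.
have [row0_sum row2_sum] := Emat_row_sums k_gt0 l_gt0 E1.
split.
- case=> A [_ [A01 B01 rowG colG _]].
  have /dvdzP[w abcdE] := even_ab_sub_cd A01 B01 rowG colG abcd_gt0 k_gt0 l_gt0.
  by split; apply/dvdzP; [exists (b%:Z - c%:Z - w) | exists (- w)]; lia.
- case=> /dvdz2_subn_even gh_even /dvdz2_subn_even ef_even.
  exact: realizable_witness.
Qed.
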